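(* Let $\Sigma$ be a finite set of symbols, let $\mathbf{x}\in\Sigma^*$, and let $S=\{(T_1,\delta_1),\dots,(T_n,\delta_n)\}$ be a perturbation space with $T_k=(\varphi_k,f_k)$, $\varphi_k:\Sigma^{s_k}\to\{0,1\}$, $f_k:\Sigma^{s_k}\to 2^{\Sigma^{t_k}}$, $s_k\ge 1$, $t_k\ge 0$. For $S'\in\mathcal{D}(S)$ and integers $i,j$ let $$H_{i,j}^{S'}=\{\mathrm{lstm}(\mathbf{z},h_0)\mid \mathbf{z}\in S'^{=}(\mathbf{x}_{1:j}),\ |\mathbf{z}|=i\},$$ with the convention $H_{i,j}^{S'}=\emptyset$ whenever $i<0$ or $j<0$. Then $H_{0,0}^{\varnothing}=\{0^d\}$, and for every $S'=\{(T_k,\delta'_k)\}_k\in\mathcal{D}(S)$ and all integers $i\ge 0$, $j\ge 1$, $$H_{i,j}^{S'}=\{\mathrm{lstm}(x_j,h)\mid h\in H_{i-1,j-1}^{S'}\}\ \cup \bigcup_{\substack{1\le k\le n,\ \delta'_k\ge 1,\ j\ge s_k\\ \varphi_k(\mathbf{x}_{j-s_k+1:j})=1}}\{\mathrm{lstm}(\mathbf{z},h)\mid \mathbf{z}\in f_k(\mathbf{x}_{j-s_k+1:j}),\ h\in H_{i-t_k,\,j-s_k}^{S'_{k\downarrow}}\}.$$ That is, the sets $H_{i,j}^{S'}$ defined directly coincide with those computed bottom-up from the base case $H_{0,0}^{\varnothing}=\{0^d\}$ by this recurrence.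
   Context: Strings: $\Sigma^*$ is the set of finite strings over $\Sigma$; for $\mathbf{x}\in\Sigma^*$, $x_i$ is its $i$-th symbol, $\mathbf{x}_{a:b}=x_a\cdots x_b$ (empty if $b<a$), $|\mathbf{x}|$ its length, $\epsilon$ the empty string. A string transformation is a pair $T=(\varphi,f)$ with match function $\varphi:\Sigma^{s}\to\{0,1\}$ and replace function $f:\Sigma^{s}\to 2^{\Sigma^{t}}$. A perturbation space is a finite set $S=\{(T_1,\delta_1),\dots,(T_n,\delta_n)\}$ with $\delta_k\in\mathbb{N}$. Its tight version $S^{=}$ maps a string $\mathbf{x}$ to the set $S^{=}(\mathbf{x})$ of all strings $\mathbf{z}$ for which there is a factorization $\mathbf{x}=\mathbf{u}_0\mathbf{w}_1\mathbf{u}_1\cdots\mathbf{w}_m\mathbf{u}_m$ (pairwise non-overlapping matched substrings $\mathbf{w}_l$) and indices $k_1,\dots,k_m$ with $\varphi_{k_l}(\mathbf{w}_l)=1$, $\mathbf{z}=\mathbf{u}_0\mathbf{w}'_1\mathbf{u}_1\cdots\mathbf{w}'_m\mathbf{u}_m$ with $\mathbf{w}'_l\in f_{k_l}(\mathbf{w}_l)$, and such that for each $k$ exactly $\delta_k$ of the $k_l$ equal $k$ (the ordinary space $S(\mathbf{x})$ is defined the same way with ''at most $\delta_k$''). The decomposition $\mathcal{D}(S)$ is the set of all perturbation spaces $\{(T_1,\delta'_1),\dots,(T_n,\delta'_n)\}$ with $0\le\delta'_k\le\delta_k$ (so $|\mathcal{D}(S)|=\prod_k(\delta_k+1)$); $\varnothing$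 denotes the element with all $\delta'_k=0$, for which $\varnothing^{=}(\mathbf{x})=\{\mathbf{x}\}$. For $S'\in\mathcal{D}(S)$ with $\delta'_k\ge1$, $S'_{k\downarrow}$ is $S'$ with $\delta'_k$ decreased by $1$. LSTM: $\mathrm{lstm}:\Sigma\times\mathbb{R}^d\to\mathbb{R}^d$ is a fixed function (an LSTM cell applied to the symbol's embedding and the concatenated hidden/cell state); it is extended to strings by $\mathrm{lstm}(\epsilon,h)=h$ and $\mathrm{lstm}(\mathbf{z},h)=\mathrm{lstm}(z_{|\mathbf{z}|},\mathrm{lstm}(\mathbf{z}_{1:|\mathbf{z}|-1},h))$; $h_0=0^d$. *)

From HB Require Import structures.
From mathcomp Require Import all_boot all_order all_algebra.
From mathcomp Require Import reals.
From Stdlib Require List.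
Set Implicit Arguments. Unset Strict Implicit. Unset Printing Implicit Defensive.
Import Order.TTheory GRing.Theory Num.Theory.

(* A string transformation T = (phi, f) with phi : Sigma^s -> {0,1},
   f : Sigma^s -> 2^(Sigma^t). Subsets of Sigma^t are predicates. *)
Record trans (Sigma : finType) := Trans {
  tr_s : nat;
  tr_t : nat;
  tr_phi : tr_s.-tuple Sigma -> bool;
  tr_f : tr_s.-tuple Sigma -> tr_t.-tuple Sigma -> Prop }.

(* x_{a:b} = x_a ... x_b (1-indexed, empty if b < a). *)
Definition substr (Sigma : Type) (x : seq Sigma) (a b : nat) : seq Sigma :=
  drop a.-1 (take b x).

Section Space.
Variables (Sigma : finType) (n : nat) (T : 'I_n -> trans Sigma).

(* One block of a factorization: a transformation index k, the matched
   substring w (in Sigma^{s_k}), its replacement w' (in Sigma^{t_k}), and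
   the untouched string u following it. *)
Definition piece := {k : 'I_n & ((tr_s (T k)).-tuple Sigma *
                                 (tr_t (T k)).-tuple Sigma * seq Sigma)%type}.

Definition piece_src (p : piece) : seq Sigma :=
  let: existT _ (w, _, u) := p in tval w ++ u.
Definition piece_tgt (p : piece) : seq Sigma :=
  let: existT k (_, w', u) := p in tval w' ++ u.
Definition piece_valid (p : piece) : Prop :=
  let: existT k (w, w', u) := p in tr_phi w = true /\ tr_f w w'.

(* The tight perturbation space S^= for S = {(T_k, delta_k)}_k:
   z \in S^=(x) iff x = u0 w1 u1 ... wm um, z = u0 w'1 u1 ... w'm um,
   phi_{k_l}(w_l) = 1, w'_l \in f_{k_l}(w_l), and exactly delta_k of the
   k_l equal k. *)
Definition tight (delta : 'I_n -> nat) (x z : seq Sigma) : Prop :=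
  exists (u0 : seq Sigma) (ps : seq piece),
    x = u0 ++ flatten (map piece_src ps) /\
    z = u0 ++ flatten (map piece_tgt ps) /\
    List.Forall piece_valid ps /\
    forall k : 'I_n, count (fun p : piece => tag p == k) ps = delta k.

Definition dec (delta : 'I_n -> nat) (k : 'I_n) : 'I_n -> nat :=
  fun k' => if k' == k then (delta k).-1 else delta k'.

End Space.

Definition lstm_str (Sigma : Type) (V : Type) (lstm : Sigma -> V -> V)
  (z : seq Sigma) (h : V) : V :=
  foldl (fun h a => lstm a h) h z.

Definition Hset (R : realType) (d : nat) (Sigma : finType) (n : nat)
  (T : 'I_n -> trans Sigma) (lstm : Sigma -> 'rV[R]_d -> 'rV[R]_d)
  (x : seq Sigma) (delta' : 'I_n -> nat) (i j : int) (h : 'rV[R]_d) : Prop :=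
  (0 <= i)%R /\ (0 <= j)%R /\
  exists z : seq Sigma,
    tight T delta' (substr x 1 `|j|%N) z /\ Posz (size z) = i /\
    h = lstm_str lstm z 0%R.

(* Look at the last block of a factorization of x_{1:j}. Either the trailing
   untouched segment u_m is nonempty, so x_j is copied and what remains is a
   factorization of x_{1:j-1} with the same budget; or u_m is empty, the last
   matched substring is w_m = x_{j-s_k+1:j}, and removing it leaves a
   factorization of x_{1:j-s_k} with budget S'_{k down}.  Both constructions
   can be reversed, and since lstm on strings is a left fold,
   lstm(z w', h0) = lstm(w', lstm(z, h0)). *)

From HB Require Import structures.
From mathcomp Require Import all_boot all_order all_algebra.
From mathcomp Require Import reals.
From Stdlib Require List.
Import Order.TTheory GRing.Theory Num.Theory.
Set Implicit Arguments. Unset Strict Implicit. Unset Printing Implicit Defensive.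

Lemma count_rcons (X : Type) (P : pred X) s x :
  count P (rcons s x) = (count P s + P x)%N.
Proof. by rewrite -cats1 count_cat /= addn0. Qed.

Lemma Forall_rcons (X : Type) (P : X -> Prop) s x :
  List.Forall P (rcons s x) <-> List.Forall P s /\ P x.
Proof.
rewrite -cats1; split.
  by case/List.Forall_app=> Ps /List.Forall_cons_iff[].
by case=> Ps Px; apply/List.Forall_app; split=> //; constructor.
Qed.

Section TightSpace.
Variables (Sigma : finType) (n : nat) (T : 'I_n -> trans Sigma).
Implicit Types (D : 'I_n -> nat) (y z : seq Sigma).

Lemma tight0 y z : tight T (fun=> 0%N) y z <-> z = y.
Proof.
split=> [[u0 [[|p ps] [-> [-> [_ cnt]]]]]|->].
- by rewrite /= !cats0.
- by move: (cnt (tag p)); rewrite /= eqxx.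
- by exists y, [::]; rewrite /= cats0.
Qed.

Lemma tight_rcons D y z c : tight T D y z -> tight T D (rcons y c) (rcons z c).
Proof.
case=> u0 [ps [-> [-> [valid cnt]]]].
case/lastP: ps valid cnt => [|ps [k [[w w'] u]]] valid cnt.
  by exists (rcons u0 c), [::]; rewrite /= !cats0.
exists u0, (rcons ps (existT _ k (w, w', rcons u c))).
rewrite !map_rcons !flatten_rcons /= -!rcons_cat !catA.
split=> //; split=> //; split.
  by move: valid; rewrite !Forall_rcons.
by move=> k'; rewrite -cnt !count_rcons.
Qed.

Lemma tight_cat_match D y z k (w : (tr_s (T k)).-tuple Sigma)
    (w' : (tr_t (T k)).-tuple Sigma) :
  (1 <= D k)%N -> tr_phi w -> tr_f w w' -> tight T (dec D k) y z ->
  tight T D (y ++ w) (z ++ w').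
Proof.
move=> Dk phw fw [u0 [ps [-> [-> [valid cnt]]]]].
exists u0, (rcons ps (existT _ k (w, w', [::]))).
rewrite !map_rcons !flatten_rcons /= !cats0 -!catA.
split=> //; split=> //; split; first exact/Forall_rcons.
move=> k'; rewrite count_rcons cnt /dec /=.
by case: eqVneq => [->|_]; rewrite ?addn0 // addn1 prednK.
Qed.

Lemma tight_rconsP D y z c : tight T D (rcons y c) z ->
  (exists z', z = rcons z' c /\ tight T D y z') \/
  (exists k (w : (tr_s (T k)).-tuple Sigma) (w' : (tr_t (T k)).-tuple Sigma) y' z',
     [/\ rcons y c = y' ++ w, z = z' ++ w', tr_phi w, tr_f w w' &
         (1 <= D k)%N /\ tight T (dec D k) y' z']).
Proof.
case=> u0 [ps [ey [-> [valid cnt]]]].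
case/lastP: ps ey valid cnt => [|ps [k [[w w'] u]]] ey valid cnt.
  left; exists y; move: ey; rewrite /= !cats0 => ey; split=> //.
  by exists y, [::]; rewrite /= cats0.
move: valid ey; rewrite Forall_rcons !map_rcons !flatten_rcons /= => -[valid [phw fw]].
have cntk := cnt k; rewrite count_rcons /= eqxx addn1 in cntk.
case/lastP: u cnt => [|u b] cnt ey.
  right; exists k, w, w', (u0 ++ flatten (map (@piece_src _ _ T) ps)),
    (u0 ++ flatten (map (@piece_tgt _ _ T) ps)).
  rewrite !cats0 -!catA in ey *; split=> //; split; first by rewrite -cntk.
  exists u0, ps; split=> //; split=> //; split=> // k'.
  rewrite /dec; case: eqVneq => [->|nk]; first by rewrite -cntk.
  by move: (cnt k'); rewrite count_rcons /= eq_sym (negbTE nk) addn0.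
move: ey; rewrite !catA -!rcons_cat => /rcons_inj[-> <-].
left; eexists; split; first reflexivity.
exists u0, (rcons ps (existT _ k (w, w', u))).
rewrite !map_rcons !flatten_rcons /= -!catA.
split=> //; split=> //; split; first exact/Forall_rcons.
by move=> k'; rewrite -cnt !count_rcons.
Qed.

End TightSpace.

Lemma take_eq_cat (X : Type) (x y w : seq X) j : (j <= size x)%N ->
  take j x = y ++ w <->
  [/\ (size w <= j)%N, y = take (j - size w) x & w = drop (j - size w) (take j x)].
Proof.
move=> jx; have sj : size (take j x) = j by rewrite size_takel.
split=> [ey|[_ -> ew]]; last first.
  by rewrite -(take_takel _ (leq_subr (size w) j)) {2}ew cat_take_drop.
have sy : size y = (j - size w)%N by rewrite -sj ey size_cat addnK.
rewrite -sy -(take_takel _ (leq_addr (size w) _)) -size_cat -ey sj ey.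
by rewrite take_size_cat // drop_size_cat // -sj ey size_cat leq_addl.
Qed.

Section TightStates.
Variables (Sigma : finType) (n : nat) (T : 'I_n -> trans Sigma).
Variables (V : Type) (step : Sigma -> V -> V) (h0 : V).
Implicit Types (D : 'I_n -> nat) (y : seq Sigma).

Definition tight_state D y a h :=
  exists z, [/\ tight T D y z, size z = a & h = lstm_str step z h0].

Lemma tight_state0 y a h :
  tight_state (fun=> 0%N) y a h <-> size y = a /\ h = lstm_str step y h0.
Proof.
split=> [[z [/tight0 -> <- ->]]|[<- ->]]; first by [].
by exists y; split=> //; apply/tight0.
Qed.

Lemma tight_state_take_succ D (x : seq Sigma) j a h : (j < size x)%N ->
  tight_state D (take j.+1 x) a h <->
  (exists h', [/\ (1 <= a)%N, tight_state D (take j x) (a - 1) h' &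
                  h = lstm_str step (substr x j.+1 j.+1) h']) \/
  (exists k, [/\ (1 <= D k)%N, (tr_s (T k) <= j.+1)%N &
     exists w : (tr_s (T k)).-tuple Sigma,
       [/\ tval w = substr x (j.+1 - tr_s (T k)).+1 j.+1, tr_phi w &
           exists (w' : (tr_t (T k)).-tuple Sigma) h',
             [/\ tr_f w w', (tr_t (T k) <= a)%N,
                 tight_state (dec D k) (take (j.+1 - tr_s (T k)) x)
                   (a - tr_t (T k)) h' &
                 h = lstm_str step w' h']]]).
Proof.
move=> jx; have c : Sigma by case: x jx => [|c].
have take_succ : take j.+1 x = rcons (take j x) (nth c x j) by rewrite (take_nth c).
have last_char : substr x j.+1 j.+1 = [:: nth c x j].
  by rewrite /substr /= take_succ -cats1 drop_size_cat // size_takel // ltnW.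
rewrite last_char; split.
- case=> z [+ <- ->]; rewrite take_succ.
  case/tight_rconsP=> [[z' [-> tz']]|[k [w [w' [y' [z' [ey -> phw fw [Dk tz']]]]]]]].
    left; exists (lstm_str step z' h0).
    by rewrite size_rcons subn1 /lstm_str foldl_rcons; split=> //; exists z'.
  move: ey tz'; rewrite -take_succ take_eq_cat // size_tuple => -[sj -> ew] tz'.
  right; exists k; split=> //; exists w; split=> //.
  exists w', (lstm_str step z' h0); rewrite size_cat size_tuple addnK leq_addl.
  by rewrite /lstm_str foldl_cat; split=> //; exists z'.
- case=> [[h' [a1 [z' [tz' sz' ->]] ->]]|].
    exists (rcons z' (nth c x j)); rewrite take_succ size_rcons sz' subn1 prednK //.
    by split=> //; [apply: tight_rcons | rewrite /lstm_str foldl_rcons].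
  case=> k [Dk sj [w [ew phw [w' [h' [fw ta [z' [tz' sz' ->]] ->]]]]]].
  exists (z' ++ w'); rewrite size_cat size_tuple sz' subnK // /lstm_str foldl_cat.
  have -> : take j.+1 x = take (j.+1 - tr_s (T k)) x ++ w.
    by apply/take_eq_cat; rewrite ?size_tuple.
  by split=> //; apply: tight_cat_match.
Qed.

End TightStates.

Section Hsets.
Variables (R : realType) (d : nat) (Sigma : finType) (n : nat).
Variables (T : 'I_n -> trans Sigma) (lstm : Sigma -> 'rV[R]_d -> 'rV[R]_d).
Variable x : seq Sigma.

Lemma Hset_subE D (a t b s : nat) h :
  Hset T lstm x D (a%:Z - t%:Z) (b%:Z - s%:Z) h <->
  [/\ (t <= a)%N, (s <= b)%N & tight_state T lstm 0%R D (take (b - s) x) (a - t) h].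
Proof.
rewrite /Hset !subr_ge0 !lez_nat /substr drop0.
split=> [[ta [sb [z [tz [sz ->]]]]]|[ta sb [z [tz sz ->]]]].
  by rewrite !subzn // in tz sz; case: sz => sz; split=> //; exists z.
by do 2!split=> //; exists z; rewrite !subzn // sz.
Qed.

Lemma Hset_natE D (a b : nat) h :
  Hset T lstm x D a b h <-> tight_state T lstm 0%R D (take b x) a h.
Proof.
have := Hset_subE D a 0 b 0 h; rewrite !subr0 !subn0 => ->.
by split=> [[]|].
Qed.

End Hsets.

Local Open Scope ring_scope.
Theorem lemma4p2 (R : realType) (d : nat) (Sigma : finType) (n : nat)
  (T : 'I_n -> trans Sigma) (delta : 'I_n -> nat)
  (lstm : Sigma -> 'rV[R]_d -> 'rV[R]_d) (x : seq Sigma)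
  (hs : forall k : 'I_n, (1 <= tr_s (T k))%N) :
  (forall h : 'rV[R]_d,
     Hset T lstm x (fun _ => 0%N) 0 0 h <-> h = 0) /\
  (forall (delta' : 'I_n -> nat), (forall k, (delta' k <= delta k)%N) ->
   forall (i j : int), 0 <= i -> 1 <= j -> j <= (size x)%:Z ->
   forall h : 'rV[R]_d,
     Hset T lstm x delta' i j h <->
     ((exists h', Hset T lstm x delta' (i - 1) (j - 1) h' /\
                  h = lstm_str lstm (substr x `|j|%N `|j|%N) h') \/
      (exists k : 'I_n,
         [/\ (1 <= delta' k)%N, (tr_s (T k))%:Z <= j &
          exists w : (tr_s (T k)).-tuple Sigma,
            [/\ tval w = substr x (`|j|%N - tr_s (T k)).+1 `|j|%N,
                tr_phi w = true &
                exists (z : (tr_t (T k)).-tuple Sigma) (h' : 'rV[R]_d),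
                  [/\ tr_f w z,
                      Hset T lstm x (dec delta' k)
                        (i - (tr_t (T k))%:Z) (j - (tr_s (T k))%:Z) h' &
                      h = lstm_str lstm (tval z) h']]]))).
Proof.
split=> [h|D _ [a|//] [[|j]|//] _ //].
  apply: (iff_trans (Hset_natE _ _ _ _ 0 0 h)).
  by rewrite take0 tight_state0; split=> [[]|->].
move=> _; rewrite lez_nat => jx h.
rewrite Hset_natE tight_state_take_succ //; split.
- case=> [[h' [a1 ts ->]]|[k [Dk sj [w [ew phw [w' [h' [fw ta ts ->]]]]]]]].
    left; exists h'; split=> //.
    by apply/(Hset_subE _ _ _ _ a 1 j.+1 1); rewrite subn1.
  right; exists k; split=> //; exists w; split=> //; exists w', h'.
  by split=> //; apply/Hset_subE.
- case=> [[h' [/Hset_subE[a1 _ ts] ->]]|].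
    by rewrite subn1 in ts; left; exists h'.
  case=> k [Dk sj [w [ew phw [w' [h' [fw /Hset_subE[ta _ ts] ->]]]]]].
  by right; exists k; split=> //; exists w; split=> //; exists w', h'.
Qed.
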